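(* Assume (i)–(iii) of the standing assumption below. Then: (1) $\mathcal S_{\mathrm{LP}}$ is the convex hull of a finite number $M$ of its extreme points $\xi^{*,1},\ldots,\xi^{*,M}$ (called modes). (2) $y^*\cdot\lambda=1$. (3) $z^*_k>0$ for every $k\in\mathcal K$. (4) For every potentially basic activity $j=(i,k)$ one has $y^*_i\mu_j=z^*_k$. (5) For every always nonbasic activity $j=(i,k)$ one has $y^*_i\mu_j<z^*_k$. (6) For every class $i\in\mathcal I$ there exists a potentially basic activity $j\in\mathcal J_i$. (7) $y^*_i>0$ for every $i\in\mathcal I$.
   Context: Let $\mathcal I$ (classes) and $\mathcal K$ (servers) be finite sets of cardinalities $I$ and $K$, and let $\mathcal J\subset\mathcal I\times\mathcal K$ (activities) have cardinality $J$. For $i\in\mathcal I$ let $\mathcal J_i=\{(i,k)\in\mathcal J\}$ and for $k\in\mathcal K$ let $\mathcal J^k=\{(i,k)\in\mathcal J\}$. Let $\lambda\in(0,\infty)^I$ and $\mu\in(0,\infty)^{\mathcal J}$. Let $R$ be the $I\times J$ matrix with $R_{ij}=\mu_j$ if $j\in\mathcal J_i$ and $R_{ij}=0$ otherwise, and $G$ the $K\times J$ matrix with $G_{kj}=1$ if $j\in\mathcal J^k$ and $0$ otherwise. The LP is: minimize $\rho$ over $(\xi,\rho)\in\mathbb R^J\times\mathbb R$ subject to $R\xi=\lambda$, $G\xi\le\rho 1_K$, $\xi\ge0$. The dual problem is: maximize $y\cdot\lambda$ over $(y,z)\in\mathbb R^I\times\mathbb R^K$ subject to $\sum_k z_k=1$,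 $yR\le zG$, $z\ge 0$. Standing assumption: (i) the optimal value of the LP is $\rho^*=1$; (ii) letting $\mathcal S_{\mathrm{LP}}=\{\xi:(\xi,1)\text{ is an optimal solution of the LP}\}$, every $\xi\in\mathcal S_{\mathrm{LP}}$ satisfies $(G\xi)_k=1$ for all $k\in\mathcal K$; (iii) the dual problem has a unique solution $(y^*,z^* )$. An activity $j$ is potentially basic if $\xi_j>0$ for some $\xi\in\mathcal S_{\mathrm{LP}}$, and always nonbasic otherwise. *)

From mathcomp Require Import all_boot all_order all_algebra.
Set Implicit Arguments. Unset Strict Implicit. Unset Printing Implicit Defensive.
Import Order.TTheory GRing.Theory Num.Theory.
Local Open Scope ring_scope.

(* Network data: classes I, servers K, activities J, where each activity j
   is the pair (cls j, srv j) in I x K; the map j |-> (cls j, srv j) is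
   injective, so J is identified with a subset of I x K.
   The matrix R has R_{ij} = mu_j if j in J_i (cls j = i), 0 otherwise;
   G has G_{kj} = 1 if j in J^k (srv j = k), 0 otherwise. *)
Section LP.
Variables (R : realFieldType) (I K J : finType) (cls : J -> I) (srv : J -> K)
  (lam : I -> R) (mu : J -> R).

Definition Rmul (xi : J -> R) (i : I) : R := \sum_(j | cls j == i) mu j * xi j.
Definition Gmul (xi : J -> R) (k : K) : R := \sum_(j | srv j == k) xi j.

Definition lp_feasible (xi : J -> R) (rho : R) : Prop :=
  [/\ forall i, Rmul xi i = lam i,
      forall k, Gmul xi k <= rho
    & forall j, 0 <= xi j].

Definition lp_optimal (xi : J -> R) (rho : R) : Prop :=
  lp_feasible xi rho /\ forall xi' rho', lp_feasible xi' rho' -> rho <= rho'.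

Definition lp_value_is (v : R) : Prop := exists xi, lp_optimal xi v.

Definition S_LP (xi : J -> R) : Prop := lp_optimal xi 1.

Definition dual_feasible (y : I -> R) (z : K -> R) : Prop :=
  [/\ \sum_k z k = 1,
      forall j, y (cls j) * mu j <= z (srv j)
    & forall k, 0 <= z k].

Definition dual_obj (y : I -> R) : R := \sum_i y i * lam i.

Definition dual_optimal (y : I -> R) (z : K -> R) : Prop :=
  dual_feasible y z /\
  forall y' z', dual_feasible y' z' -> dual_obj y' <= dual_obj y.

Definition potentially_basic (j : J) : Prop := exists xi, S_LP xi /\ 0 < xi j.
Definition always_nonbasic (j : J) : Prop := ~ potentially_basic j.

End LP.

Section Convex.
Variables (R : realFieldType) (J : finType).

Definition extreme_point (S : (J -> R) -> Prop) (x : J -> R) : Prop :=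
  S x /\
  forall a b (t : R), S a -> S b -> 0 < t -> t < 1 ->
    (forall j, x j = t * a j + (1 - t) * b j) ->
    (forall j, a j = x j) /\ (forall j, b j = x j).

Definition in_conv_hull (M : nat) (pts : 'I_M -> J -> R) (x : J -> R) : Prop :=
  exists w : 'I_M -> R,
    [/\ forall m, 0 <= w m, \sum_m w m = 1
      & forall j, x j = \sum_m w m * pts m j].
End Convex.

From mathcomp Require Import all_boot all_order all_algebra.
From mathcomp Require Import ring lra.
From Stdlib Require Import Classical_Prop ClassicalEpsilon.
Set Implicit Arguments. Unset Strict Implicit. Unset Printing Implicit Defensive.
Import Order.TTheory GRing.Theory Num.Theory.
Local Open Scope ring_scope.

(* Every claim about the dual is an instance of one alternative, obtained from
   Farkas' lemma (proved by Fourier-Motzkin elimination): either some primal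
   optimum makes a given complementary constraint slack, or the dual has a ray
   (y', z') on which the complementary dual slack is positive.  Adding a ray
   to (y_star, z_star) and renormalising gives another dual optimum, so by uniqueness
   every ray is a multiple of (y_star, z_star); hence the dual slack is already
   positive at (y_star, z_star).  The primal alternative is excluded by (ii) for the
   server constraints, which gives (2) and (3), and by definition for always
   nonbasic activities, which gives (5); (4) is complementary slackness and
   (6), (7) follow from lam > 0.
   For (1): by (ii), S_LP lies in the affine space G xi = 1, so a point of
   S_LP that is not the only one with its support splits, along a direction
   inside that support, into two points of strictly smaller support.  Thus
   every point is a convex combination of extreme points, and an extreme point
   is determined by its support. *)

Section Farkas.
Variable R : realFieldType.

Lemma sum_delta (T : finType) (p : T) (F : T -> R) :
  \sum_l (l == p)%:R * F l = F p.
Proof.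
rewrite (bigD1 p) //= eqxx mul1r big1 ?addr0 // => l /negbTE ->.
by rewrite mul0r.
Qed.

Lemma sum_delta2 (T : finType) (p q : T) (al be : R) (F : T -> R) :
  \sum_l (al * (l == p)%:R + be * (l == q)%:R) * F l = al * F p + be * F q.
Proof.
under eq_bigr do rewrite mulrDl -!mulrA.
by rewrite big_split /= -!mulr_sumr !sum_delta.
Qed.

Lemma ex_between_seq (lo hi : seq R) :
  (forall p q, p \in lo -> q \in hi -> p <= q) ->
  exists t, (forall p, p \in lo -> p <= t) /\ (forall q, q \in hi -> t <= q).
Proof.
elim: lo => [_|a lo IH lo_hi].
  elim: hi => [|b hi [t [_ t_hi]]]; first by exists 0.
  exists (Num.min b t); split=> // q; rewrite inE => /orP [/eqP ->|/t_hi tq].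
    by rewrite ge_min lexx.
  by rewrite ge_min tq orbT.
have [p q pin qin|t [lo_t t_hi]] := IH; first by apply: lo_hi; rewrite // inE pin orbT.
exists (Num.max a t); split=> [p|q qin].
  by rewrite inE le_max => /orP [/eqP ->|/lo_t ->]; rewrite ?lexx ?orbT.
by rewrite ge_max t_hi // andbT; apply: lo_hi; rewrite ?inE ?eqxx.
Qed.

Variable V : finType.

Definition affine_at (L : finType) (a : L -> V -> R) (c : L -> R) l (x : V -> R) :=
  \sum_v a l v * x v + c l.

Definition affine_feasible (L : finType) (a : L -> V -> R) (c : L -> R) :=
  exists x, forall l, 0 <= affine_at a c l x.

Definition farkas_cert (L : finType) (a : L -> V -> R) (c : L -> R) :=
  exists u : L -> R, [/\ forall l, 0 <= u l, forall v, \sum_l u l * a l v = 0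
                       & \sum_l u l * c l < 0].

Lemma farkas_cert_comb (L L' : finType) (w : L' -> L -> R) a c :
  (forall l' l, 0 <= w l' l) ->
  farkas_cert (fun l' v => \sum_l w l' l * a l v) (fun l' => \sum_l w l' l * c l) ->
  farkas_cert a c.
Proof.
move=> w_ge0 [u [u_ge0 ua uc]].
have comb F : \sum_l (\sum_l' u l' * w l' l) * F l = \sum_l' u l' * \sum_l w l' l * F l.
  under eq_bigr do rewrite mulr_suml.
  rewrite exchange_big; apply: eq_bigr => l' _; rewrite mulr_sumr.
  by apply: eq_bigr => l _; rewrite mulrA.
exists (fun l => \sum_l' u l' * w l' l); split.
- by move=> l; apply: sumr_ge0 => l' _; apply: mulr_ge0.
- by move=> v; rewrite comb.
- by rewrite comb.
Qed.

Lemma farkas_const (L : finType) (a : L -> V -> R) c :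
  (forall l v, a l v = 0) -> ~ affine_feasible a c -> farkas_cert a c.
Proof.
move=> a0 infeas; have [l cl|c_ge0] := pickP (fun l => c l < 0).
  exists (fun l' => (l' == l)%:R); split=> [l'|v|]; rewrite ?sum_delta ?ler0n //.
exfalso; apply: infeas; exists (fun _ => 0) => l.
rewrite /affine_at big1 ?add0r ?leNgt ?c_ge0 // => v _.
by rewrite mulr0.
Qed.

Section FourierMotzkin.
Variables (L : finType) (a : L -> V -> R) (c : L -> R) (v0 : V).

(* Each new row is a nonnegative combination of old rows with no [v0] term:
   an old row not involving [v0], or a pair of rows with opposite signs there. *)
Definition fm_weight (l' : L + L * L) (l : L) : R :=
  match l' with
  | inl p => if a p v0 == 0 then (l == p)%:R else 0
  | inr (p, q) => if (0 < a p v0) && (a q v0 < 0) then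
      - a q v0 * (l == p)%:R + a p v0 * (l == q)%:R else 0
  end.

Definition fm_coef l' v := \sum_l fm_weight l' l * a l v.
Definition fm_const l' := \sum_l fm_weight l' l * c l.

Lemma fm_weight_ge0 l' l : 0 <= fm_weight l' l.
Proof.
case: l' => [p|[p q]] /=; first by case: ifP; rewrite ?ler0n.
case: ifP => // /andP [ap aq].
by apply: addr_ge0; apply: mulr_ge0; rewrite ?ler0n ?oppr_ge0 ?ltW.
Qed.

Lemma fm_coef_v0 l' : fm_coef l' v0 = 0.
Proof.
rewrite /fm_coef; case: l' => [p|[p q]] /=.
  by case: eqP => [ap0|_]; rewrite ?sum_delta // big1 // => l _; rewrite mul0r.
case: (boolP ((0 < a p v0) && (a q v0 < 0))) => pq.
  by rewrite sum_delta2; ring.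
by rewrite big1 // => l _; rewrite mul0r.
Qed.

Lemma affine_at_fm l' x :
  affine_at fm_coef fm_const l' x = \sum_l fm_weight l' l * affine_at a c l x.
Proof.
rewrite /affine_at /fm_coef /fm_const.
under eq_bigr do rewrite mulr_suml.
rewrite exchange_big /= -big_split /=; apply: eq_bigr => l _.
by rewrite mulrDr mulr_sumr; congr (_ + _); apply: eq_bigr => v _; rewrite mulrA.
Qed.

Lemma fm_feasible : affine_feasible fm_coef fm_const -> affine_feasible a c.
Proof.
move=> [x fm_x].
pose g l := affine_at a c l x - a l v0 * x v0.
pose xt t v := if v == v0 then t else x v.
have at_xt l t : affine_at a c l (xt t) = g l + a l v0 * t.
  rewrite /g /affine_at (bigD1 v0) // [in RHS](bigD1 v0) //= /xt eqxx.
  suff -> : \sum_(v | v != v0) a l v * (if v == v0 then t else x v) =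
            \sum_(v | v != v0) a l v * x v by ring.
  by apply: eq_bigr => v /negbTE ->.
have at_x l : affine_at a c l x = g l + a l v0 * x v0 by rewrite /g subrK.
pose lo := [seq - g l / a l v0 | l <- enum L & 0 < a l v0].
pose hi := [seq - g l / a l v0 | l <- enum L & a l v0 < 0].
have [p' q' /mapP [p] | t [lo_t t_hi]] := @ex_between_seq lo hi.
  rewrite mem_filter => /andP [ap _] -> /mapP [q]; rewrite mem_filter => /andP [aq _] ->.
  have := fm_x (inr (p, q)); rewrite affine_at_fm /= ap aq sum_delta2 !at_x => H.
  rewrite ler_ndivlMr // mulrAC ler_pdivlMr //; lra.
exists (xt t) => l; rewrite at_xt; case: (ltgtP (a l v0) 0) => al.
- have : t <= - g l / a l v0 by apply: t_hi; apply: map_f; rewrite mem_filter al mem_enum.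
  rewrite ler_ndivlMr // => H; lra.
- have : - g l / a l v0 <= t by apply: lo_t; apply: map_f; rewrite mem_filter al mem_enum.
  rewrite ler_pdivrMr // => H; lra.
- have := fm_x (inl l); rewrite affine_at_fm /= al eqxx sum_delta at_x al.
  by rewrite !mul0r addr0.
Qed.

End FourierMotzkin.

Lemma farkas_supp n (A : {set V}) (L : finType) (a : L -> V -> R) c :
  (#|A| <= n)%N -> (forall l v, v \notin A -> a l v = 0) ->
  ~ affine_feasible a c -> farkas_cert a c.
Proof.
elim: n A L a c => [|n IH] A L a c A_n a_A infeas.
  apply: farkas_const infeas => l v; apply: a_A.
  by move: A_n; rewrite leqn0 => /eqP/cards0_eq ->; rewrite inE.
have [A0|/set0Pn [v0 v0A]] := eqVneq A set0.
  by apply: farkas_const infeas => l v; apply: a_A; rewrite A0 inE.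
apply: (farkas_cert_comb (@fm_weight_ge0 L a v0)).
apply: (IH (A :\ v0)); first by move: A_n; rewrite (cardsD1 v0) v0A.
  move=> l' v; rewrite !inE negb_and negbK => /orP [/eqP ->|vA].
    exact: fm_coef_v0.
  by rewrite /fm_coef big1 // => l _; rewrite a_A // mulr0.
by move/fm_feasible.
Qed.

Theorem farkas (L : finType) (a : L -> V -> R) (c : L -> R) :
  ~ affine_feasible a c -> farkas_cert a c.
Proof. by apply: (@farkas_supp #|[set: V]| setT) => // l v; rewrite inE. Qed.

End Farkas.

Section LPDuality.
Variables (R : realFieldType) (I K J : finType) (cls : J -> I) (srv : J -> K)
  (lam : I -> R) (mu : J -> R).

Local Notation Rmul := (Rmul cls mu).
Local Notation Gmul := (Gmul srv).

Lemma Rmul_scale (al : R) (x : J -> R) i : Rmul (fun j => al * x j) i = al * Rmul x i.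
Proof. by rewrite /Rmul mulr_sumr; apply: eq_bigr => j _; rewrite mulrCA. Qed.

Lemma Gmul_scale (al : R) (x : J -> R) k : Gmul (fun j => al * x j) k = al * Gmul x k.
Proof. by rewrite /Gmul mulr_sumr. Qed.

Lemma Rmul_add_scale (al : R) (x d : J -> R) i :
  Rmul (fun j => x j + al * d j) i = Rmul x i + al * Rmul d i.
Proof.
by rewrite /Rmul mulr_sumr -big_split; apply: eq_bigr => j _; rewrite mulrDr mulrCA.
Qed.

Lemma Gmul_add_scale (al : R) (x d : J -> R) k :
  Gmul (fun j => x j + al * d j) k = Gmul x k + al * Gmul d k.
Proof. by rewrite /Gmul mulr_sumr -big_split. Qed.

Lemma Rmul_sub (x x' : J -> R) i : Rmul (fun j => x j - x' j) i = Rmul x i - Rmul x' i.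
Proof. by rewrite /Rmul -sumrB; apply: eq_bigr => j _; rewrite mulrBr. Qed.

Lemma Gmul_sub (x x' : J -> R) k : Gmul (fun j => x j - x' j) k = Gmul x k - Gmul x' k.
Proof. by rewrite /Gmul -sumrB. Qed.

Lemma Rmul_sum (M : nat) (w : 'I_M -> R) (P : 'I_M -> J -> R) i :
  Rmul (fun j => \sum_m w m * P m j) i = \sum_m w m * Rmul (P m) i.
Proof.
rewrite /Rmul; under [RHS]eq_bigr do rewrite mulr_sumr.
rewrite [RHS]exchange_big; apply: eq_bigr => j _.
by rewrite mulr_sumr; apply: eq_bigr => m _; rewrite mulrCA.
Qed.

Lemma Gmul_sum (M : nat) (w : 'I_M -> R) (P : 'I_M -> J -> R) k :
  Gmul (fun j => \sum_m w m * P m j) k = \sum_m w m * Gmul (P m) k.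
Proof.
by rewrite /Gmul; under [RHS]eq_bigr do rewrite mulr_sumr; rewrite [RHS]exchange_big.
Qed.

Lemma Rmul_delta j0 i : Rmul (fun j => (j == j0)%:R) i = (cls j0 == i)%:R * mu j0.
Proof.
rewrite /Rmul big_mkcond (eq_bigr (fun j => (j == j0)%:R * (if cls j == i then mu j else 0))).
  by rewrite sum_delta; case: ifP; rewrite ?mul1r ?mul0r.
by move=> j _; case: ifP; rewrite ?mulr0 // mulrC.
Qed.

Lemma Gmul_delta j0 k : Gmul (fun j => (j == j0)%:R) k = (srv j0 == k)%:R :> R.
Proof.
rewrite /Gmul big_mkcond (eq_bigr (fun j => (j == j0)%:R * (srv j == k)%:R)).
  by rewrite sum_delta.
by move=> j _; case: ifP; rewrite ?mulr0 ?mulr1.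
Qed.

Lemma Gmul_ge (x : J -> R) j : (forall j, 0 <= x j) -> x j <= Gmul x (srv j).
Proof. by move=> x_ge0; rewrite /Gmul (bigD1 j) //= lerDl sumr_ge0. Qed.

Lemma duality_gap (xi : J -> R) (y : I -> R) (z : K -> R) :
  \sum_j (z (srv j) - y (cls j) * mu j) * xi j =
  \sum_k z k * Gmul xi k - \sum_i y i * Rmul xi i.
Proof.
have -> : \sum_k z k * Gmul xi k = \sum_j z (srv j) * xi j.
  rewrite (partition_big srv predT) //=; apply: eq_bigr => k _.
  by rewrite mulr_sumr; apply: eq_bigr => j /eqP ->.
have -> : \sum_i y i * Rmul xi i = \sum_j y (cls j) * (mu j * xi j).
  rewrite (partition_big cls predT) //=; apply: eq_bigr => i _.
  by rewrite mulr_sumr; apply: eq_bigr => j /eqP ->.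
by rewrite -sumrB; apply: eq_bigr => j _; rewrite mulrBl mulrA.
Qed.

Lemma weak_duality xi rho y z :
  lp_feasible cls srv lam mu xi rho -> dual_feasible cls srv mu y z ->
  dual_obj lam y <= rho.
Proof.
case=> Rxi Gxi xi_ge0 [zsum yz z_ge0].
have : 0 <= \sum_j (z (srv j) - y (cls j) * mu j) * xi j.
  by apply: sumr_ge0 => j _; rewrite mulr_ge0 // subr_ge0.
have : \sum_k z k * Gmul xi k <= rho.
  rewrite -[rho]mul1r -zsum mulr_suml; apply: ler_sum => k _.
  by rewrite ler_wpM2l.
rewrite duality_gap /dual_obj; under [\sum_i y i * lam i]eq_bigr do rewrite -Rxi.
lra.
Qed.

Definition dual_ray (y : I -> R) (z : K -> R) : Prop :=
  [/\ forall k, 0 <= z k, forall j, y (cls j) * mu j <= z (srv j)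
    & \sum_k z k <= dual_obj lam y].

Definition pair_val (ey : I -> R) (ez : K -> R) (y : I -> R) (z : K -> R) : R :=
  \sum_i ey i * y i + \sum_k ez k * z k.

Lemma dual_obj_add_div (y y' : I -> R) (N : R) :
  dual_obj lam (fun i => (y i + y' i) / N) = (dual_obj lam y + dual_obj lam y') / N.
Proof.
rewrite /dual_obj -big_split mulr_suml; apply: eq_bigr => i _ /=.
by rewrite mulrAC mulrDl.
Qed.

Lemma dual_feasible_add_ray y z y' z' :
  dual_feasible cls srv mu y z -> dual_ray y' z' ->
  dual_feasible cls srv mu (fun i => (y i + y' i) / (1 + \sum_k z' k))
                           (fun k => (z k + z' k) / (1 + \sum_k z' k)).
Proof.
move=> [zsum yz z_ge0] [z'_ge0 yz' _].
have N_gt0 : 0 < 1 + \sum_k z' k by rewrite ltr_wpDr ?sumr_ge0.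
split=> [|j|k].
- by rewrite -mulr_suml big_split /= zsum divff ?gt_eqF.
- by rewrite mulrAC ler_pM2r ?invr_gt0 // mulrDl; apply: lerD.
- by apply: divr_ge0; [apply: addr_ge0 | apply: ltW].
Qed.

(* [dual_ray y z /\ 1 <= pair_val ey ez y z] as an affine system in the unknown
   [(y, z) : I + K -> R]: rows [inl k] say [0 <= z k], rows [inr (inl j)] are
   the dual constraints, [inr (inr true)] compares [sum_k z k] with the
   objective and [inr (inr false)] is the normalisation. *)
Definition ray_coef (ey : I -> R) (ez : K -> R) (l : K + (J + bool)) (v : I + K) : R :=
  match l, v with
  | inl k, inl _ => 0
  | inl k, inr k' => (k' == k)%:R
  | inr (inl j), inl i => (i == cls j)%:R * - mu j
  | inr (inl j), inr k => (k == srv j)%:R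
  | inr (inr true), inl i => lam i
  | inr (inr true), inr k => -1
  | inr (inr false), inl i => ey i
  | inr (inr false), inr k => ez k
  end.

Definition ray_const (l : K + (J + bool)) : R := if l is inr (inr false) then -1 else 0.

Lemma ray_of_feasible ey ez : affine_feasible (ray_coef ey ez) ray_const ->
  exists y z, dual_ray y z /\ 1 <= pair_val ey ez y z.
Proof.
move=> [x x_sol]; exists (fun i => x (inl i)), (fun k => x (inr k)); split; first split.
- move=> k; have := x_sol (inl k).
  rewrite /affine_at big_sumType /= big1 ?add0r ?addr0 ?sum_delta // => i _.
  by rewrite mul0r.
- move=> j; have := x_sol (inr (inl j)); rewrite /affine_at big_sumType /= addr0.
  under eq_bigr do rewrite -mulrA.
  rewrite !sum_delta; lra.
- have := x_sol (inr (inr true)); rewrite /affine_at big_sumType /= addr0.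
  under eq_bigr do rewrite mulrC.
  under [X in _ + X]eq_bigr do rewrite mulN1r.
  rewrite sumrN /dual_obj; lra.
- by have := x_sol (inr (inr false)); rewrite /affine_at /pair_val big_sumType /=; lra.
Qed.

Lemma dual_ray_alternative (ey : I -> R) (ez : K -> R) :
  ~ (exists y z, dual_ray y z /\ 1 <= pair_val ey ez y z) ->
  exists xi t p s, [/\ forall j, 0 <= xi j, 0 <= t, forall k, 0 <= p k & 0 < s] /\
    (forall i, Rmul xi i = t * lam i + s * ey i) /\
    (forall k, Gmul xi k = t - p k - s * ez k).
Proof.
move=> no_ray; have /farkas [u [u_ge0 u_a u_c]] : ~ affine_feasible (ray_coef ey ez) ray_const.
  by move/ray_of_feasible.
exists (fun j => u (inr (inl j))), (u (inr (inr true))), (fun k => u (inl k)),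
  (u (inr (inr false))); split; [split => // | split].
- move: u_c; rewrite big_sumType big_sumType big_bool /= !big1 => [|*|*]; rewrite ?mulr0 //.
  lra.
- move=> i; have := u_a (inl i); rewrite big_sumType big_sumType big_bool /=.
  rewrite big1 => [|*]; last by rewrite mulr0.
  suff -> : \sum_j u (inr (inl j)) * ((i == cls j)%:R * - mu j) =
            - Rmul (fun j => u (inr (inl j))) i by lra.
  rewrite /Rmul [in RHS]big_mkcond -sumrN /=; apply: eq_bigr => j _.
  by rewrite eq_sym; case: ifP => _ /=; ring.
- move=> k; have := u_a (inr k); rewrite big_sumType big_sumType big_bool /=.
  under eq_bigr do rewrite mulrC eq_sym.
  rewrite sum_delta.
  suff -> : \sum_j u (inr (inl j)) * (k == srv j)%:R =
            Gmul (fun j => u (inr (inl j))) k by lra.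
  rewrite /Gmul [in RHS]big_mkcond /=; apply: eq_bigr => j _.
  by rewrite eq_sym; case: ifP => _ /=; ring.
Qed.

Lemma pair_val_server k0 y z : pair_val (fun _ => 0) (fun k => (k == k0)%:R) y z = z k0.
Proof. by rewrite /pair_val big1 ?add0r ?sum_delta // => i _; rewrite mul0r. Qed.

Lemma pair_val_activity j0 y z :
  pair_val (fun i => - ((i == cls j0)%:R * mu j0)) (fun k => (k == srv j0)%:R) y z =
  z (srv j0) - y (cls j0) * mu j0.
Proof.
rewrite /pair_val sum_delta addrC; congr (_ + _).
by under eq_bigr do rewrite mulNr mulrAC -mulrA; rewrite sumrN sum_delta.
Qed.

End LPDuality.

Section ConvexHull.
Variables (R : realFieldType) (J : finType) (M : nat) (pts : 'I_M -> J -> R).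

Lemma in_conv_hull_pt m x : (forall j, x j = pts m j) -> in_conv_hull pts x.
Proof.
move=> x_m; exists (fun m' => (m' == m)%:R); split=> [m'||j].
- by rewrite ler0n.
- by rewrite (eq_bigr (fun m' => (m' == m)%:R * 1)) ?sum_delta // => m' _; rewrite mulr1.
- by rewrite sum_delta.
Qed.

Lemma in_conv_hull_comb x x1 x2 t :
  in_conv_hull pts x1 -> in_conv_hull pts x2 -> 0 <= t -> t <= 1 ->
  (forall j, x j = t * x1 j + (1 - t) * x2 j) -> in_conv_hull pts x.
Proof.
move=> [w1 [w1_ge0 w1_sum x1_w1]] [w2 [w2_ge0 w2_sum x2_w2]] t_ge0 t_le1 x_comb.
exists (fun m => t * w1 m + (1 - t) * w2 m); split=> [m||j].
- by rewrite addr_ge0 // mulr_ge0 ?subr_ge0.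
- by rewrite big_split /= -!mulr_sumr w1_sum w2_sum !mulr1 subrKC.
- rewrite x_comb x1_w1 x2_w2 !mulr_sumr -big_split /=; apply: eq_bigr => m _; ring.
Qed.

End ConvexHull.

Section OptimalFace.
Variables (R : realFieldType) (I K J : finType) (cls : J -> I) (srv : J -> K)
  (lam : I -> R) (mu : J -> R) (xi0 : J -> R).
Hypotheses (xi0_opt : lp_optimal cls srv lam mu xi0 1)
  (S_LP_tight : forall xi, S_LP cls srv lam mu xi -> forall k, Gmul srv xi k = 1).

Local Notation S := (S_LP cls srv lam mu).
Local Notation Rmul := (Rmul cls mu).
Local Notation Gmul := (Gmul srv).

Lemma S_LP_iff xi : S xi <-> lp_feasible cls srv lam mu xi 1.
Proof. by split=> [[]|xi_feas] //; split=> //; case: xi0_opt. Qed.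

Lemma S_LP_scale xi t p : 0 < t -> (forall j, 0 <= xi j) -> (forall k, 0 <= p k) ->
  (forall i, Rmul xi i = t * lam i) -> (forall k, Gmul xi k = t - p k) ->
  S (fun j => t^-1 * xi j).
Proof.
move=> t_gt0 xi_ge0 p_ge0 Rxi Gxi; apply/S_LP_iff; split=> [i|k|j].
- by rewrite Rmul_scale Rxi mulKf ?gt_eqF.
- rewrite Gmul_scale Gxi mulrBr mulVf ?gt_eqF // lerBlDr lerDl.
  by apply: mulr_ge0; [rewrite invr_ge0 ltW | apply: p_ge0].
- by apply: mulr_ge0; [rewrite invr_ge0 ltW | apply: xi_ge0].
Qed.

Definition supp (x : J -> R) : {set J} := [set j | x j != 0].

Lemma supp_subset_eq0 (a x : J -> R) j : supp a \subset supp x -> x j = 0 -> a j = 0.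
Proof.
move=> a_x xj0; apply/eqP; move: (contra (subsetP a_x j)); rewrite !inE !negbK.
by apply; rewrite xj0.
Qed.

Lemma Gmul_eq0_neg (d : J -> R) j0 :
  (forall k, Gmul d k = 0) -> d j0 != 0 -> exists j, d j < 0.
Proof.
move=> Gd0 dj0; apply: NNPP => no_neg.
have d_ge0 j : 0 <= d j by rewrite leNgt; apply/negP => dj; apply: no_neg; exists j.
have := Gmul_ge srv j0 d_ge0; rewrite Gd0 => dj0_le0.
by move: dj0; rewrite eq_le dj0_le0 d_ge0.
Qed.

Lemma ratio_test x d : S x -> supp d \subset supp x ->
  (forall i, Rmul d i = 0) -> (forall k, Gmul d k = 0) -> (exists j, d j < 0) ->
  exists2 al, 0 < al & S (fun j => x j + al * d j) /\
                       (#|supp (fun j => (x j + al * d j)%R)| < #|supp x|)%N.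
Proof.
move=> Sx d_x Rd0 Gd0 [j1 dj1].
have [Rx Gx x_ge0] := (S_LP_iff x).1 Sx.
have d_eq0 j : x j = 0 -> d j = 0 := supp_subset_eq0 d_x.
have [js djs js_min] := @arg_minP _ _ _ j1 (fun j => d j < 0) (fun j => x j / - d j) dj1.
have xjs_gt0 : 0 < x js.
  by rewrite lt_def x_ge0 andbT; apply/eqP => /d_eq0 dj0; move: djs; rewrite dj0 ltxx.
pose al := x js / - d js.
have al_gt0 : 0 < al by rewrite divr_gt0 // oppr_gt0.
exists al => //; split.
  apply/S_LP_iff; split=> [i|k|j].
  - by rewrite Rmul_add_scale Rd0 mulr0 addr0.
  - by rewrite Gmul_add_scale Gd0 mulr0 addr0.
  - have [dj|] := ltP (d j) 0; last by move=> dj; rewrite addr_ge0 ?x_ge0 // mulr_ge0 // ltW.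
    have := js_min j dj; rewrite -/al ler_pdivlMr ?oppr_gt0 // => h; nra.
apply: proper_card; apply/properP; split.
  apply/subsetP => j; rewrite !inE; apply: contraNN => /eqP xj0.
  by rewrite xj0 (d_eq0 _ xj0) mulr0 addr0.
exists js; first by rewrite inE gt_eqF.
by rewrite inE negbK /al; apply/eqP; field; rewrite lt_eqF.
Qed.

Lemma S_LP_split x a j0 : S x -> S a -> supp a \subset supp x -> a j0 != x j0 ->
  exists x1 x2 t,
    [/\ S x1, S x2, (#|supp x1| < #|supp x|)%N & (#|supp x2| < #|supp x|)%N] /\
    [/\ 0 < t, t < 1 & forall j, x j = t * x1 j + (1 - t) * x2 j].
Proof.
move=> Sx Sa a_x aj0.
have [[Rx _ _] [Ra _ _]] := ((S_LP_iff x).1 Sx, (S_LP_iff a).1 Sa).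
have step (s : R) : s != 0 -> exists2 al, 0 < al &
    S (fun j => x j + al * (s * (a j - x j))) /\
    (#|supp (fun j => (x j + al * (s * (a j - x j)))%R)| < #|supp x|)%N.
  move=> s_neq0.
  have G0 k : Gmul (fun j => s * (a j - x j)) k = 0.
    by rewrite Gmul_scale Gmul_sub !S_LP_tight // subrr mulr0.
  apply: ratio_test => //.
  - apply/subsetP => j; rewrite !inE; apply: contraNN => /eqP xj0.
    by rewrite xj0 (supp_subset_eq0 a_x xj0) subrr mulr0.
  - by move=> i; rewrite Rmul_scale Rmul_sub Rx Ra subrr mulr0.
  - by apply: (Gmul_eq0_neg (j0 := j0) G0); apply: mulf_neq0; rewrite ?subr_eq0.
have [al al_gt0 [S1 supp1]] := step 1 (oner_neq0 _).
have [|be be_gt0 [S2 supp2]] := step (-1); first by rewrite oppr_eq0 oner_neq0.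
exists (fun j => x j + al * (1 * (a j - x j))), (fun j => x j + be * (-1 * (a j - x j))),
  (be / (al + be)); split=> //; split=> [||j].
- by rewrite divr_gt0 ?addr_gt0.
- by rewrite ltr_pdivrMr ?addr_gt0 // mul1r ltrDr.
- by field; rewrite lt0r_neq0 ?addr_gt0.
Qed.

Lemma extreme_point_supp x : S x ->
  extreme_point S x <-> (forall a, S a -> supp a \subset supp x -> forall j, a j = x j).
Proof.
move=> Sx; split=> [[_ x_ext] a Sa a_x j|x_uniq].
  apply/eqP; apply: contraT => aj.
  have [x1 [x2 [t [[S1 S2 supp1 _] [t_gt0 t_lt1 x_comb]]]]] := S_LP_split Sx Sa a_x aj.
  have [x1_x _] := x_ext _ _ _ S1 S2 t_gt0 t_lt1 x_comb.
  have supp_x1 : supp x1 = supp x by apply/setP => j'; rewrite !inE x1_x.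
  by move: supp1; rewrite supp_x1 ltnn.
split=> // a b t Sa Sb t_gt0 t_lt1 x_comb.
have [[_ _ a_ge0] [_ _ b_ge0]] := ((S_LP_iff a).1 Sa, (S_LP_iff b).1 Sb).
have a_x : supp a \subset supp x.
  apply/subsetP => j; rewrite !inE; apply: contraNN => /eqP xj0.
  move: (x_comb j); rewrite xj0 => /esym/eqP.
  rewrite paddr_eq0; first by rewrite mulf_eq0 gt_eqF //= => /andP [].
  - by apply: mulr_ge0; [exact: ltW | exact: a_ge0].
  - by apply: mulr_ge0; [rewrite subr_ge0 ltW | exact: b_ge0].
have a_eq := x_uniq a Sa a_x; split=> // j.
have : (1 - t) * (b j - x j) = 0 by move: (x_comb j); rewrite a_eq => ?; lra.
by move/eqP; rewrite mulf_eq0 subr_eq0 (gt_eqF t_lt1) /= subr_eq0 => /eqP.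
Qed.

Lemma S_LP_ind (Q : (J -> R) -> Prop) :
  (forall x, extreme_point S x -> Q x) ->
  (forall x x1 x2 t, Q x1 -> Q x2 -> 0 <= t -> t <= 1 ->
     (forall j, x j = t * x1 j + (1 - t) * x2 j) -> Q x) ->
  forall x, S x -> Q x.
Proof.
move=> Q_ext Q_comb.
suff Q_supp n x : S x -> (#|supp x| < n)%N -> Q x.
  by move=> x Sx; apply: (Q_supp _ _ Sx (ltnSn _)).
elim: n x => // n IH x Sx supp_x.
have [[a [j0 [Sa a_x aj0]]]|no_a] :=
  classic (exists a j0, [/\ S a, supp a \subset supp x & a j0 != x j0]).
  have [x1 [x2 [t [[S1 S2 supp1 supp2] [t_gt0 t_lt1 x_comb]]]]] := S_LP_split Sx Sa a_x aj0.
  apply: (Q_comb x x1 x2 t _ _ (ltW t_gt0) (ltW t_lt1) x_comb); apply: IH => //.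
  - exact: leq_trans supp1 (ltnSE supp_x).
  - exact: leq_trans supp2 (ltnSE supp_x).
apply/Q_ext/(extreme_point_supp Sx) => a Sa a_x j.
by apply/eqP; apply: contraT => aj; exfalso; apply: no_a; exists a, j.
Qed.

Lemma S_LP_conv_hull M (pts : 'I_M -> J -> R) xi :
  (forall m, S (pts m)) -> in_conv_hull pts xi -> S xi.
Proof.
move=> S_pts [w [w_ge0 w_sum xi_w]]; apply/S_LP_iff; split=> [i|k|j].
- rewrite /Rmul (eq_bigr _ (fun j _ => congr1 _ (xi_w j))) -/(Rmul _ i) Rmul_sum.
  rewrite -[lam i]mul1r -w_sum mulr_suml; apply: eq_bigr => m _.
  by have [-> _ _] := (S_LP_iff _).1 (S_pts m).
- rewrite /Gmul (eq_bigr _ (fun j _ => xi_w j)) -/(Gmul _ k) Gmul_sum -w_sum.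
  apply: ler_sum => m _; rewrite ler_piMr //.
  by have [_ -> _] := (S_LP_iff _).1 (S_pts m).
- rewrite xi_w; apply: sumr_ge0 => m _; apply: mulr_ge0 => //.
  by have [_ _ ->] := (S_LP_iff _).1 (S_pts m).
Qed.

Lemma ex_extreme_point : exists e, extreme_point S e.
Proof.
apply: (@S_LP_ind (fun _ => exists e, extreme_point S e) _ _ xi0) => [x x_ext|x x1 x2 t //|].
  by exists x.
by case: xi0_opt.
Qed.

(* The modes are indexed by all subsets of [J]; a subset that is the support of
   no extreme point gets an arbitrary extreme point, a harmless repetition. *)
Definition extreme_of_supp_spec (A : {set J}) (e : J -> R) : Prop :=
  extreme_point S e /\ (supp e = A \/ ~ exists e', extreme_point S e' /\ supp e' = A).

Definition extreme_of_supp (A : {set J}) : J -> R :=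
  epsilon (inhabits (fun _ => 0)) (extreme_of_supp_spec A).

Lemma extreme_of_suppP A : extreme_of_supp_spec A (extreme_of_supp A).
Proof.
apply: epsilon_spec.
have [[e [e_ext e_A]]|no_e] := classic (exists e, extreme_point S e /\ supp e = A).
  by exists e; split=> //; left.
by have [e e_ext] := ex_extreme_point; exists e; split=> //; right.
Qed.

Theorem S_LP_modes : exists (M : nat) (pts : 'I_M -> J -> R),
  (forall m, extreme_point S (pts m)) /\ (forall xi, S xi <-> in_conv_hull pts xi).
Proof.
pose pts m := extreme_of_supp (enum_val (m : 'I_#|{set J}|)).
have pts_ext m : extreme_point S (pts m) by case: (extreme_of_suppP (enum_val m)).
exists #|{set J}|, pts; split=> // xi; split.
  2: by apply: S_LP_conv_hull => m; case: (pts_ext m).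
apply: S_LP_ind => [x x_ext|]; last exact: in_conv_hull_comb.
have [e_ext [supp_e|no_e]] := extreme_of_suppP (supp x); last first.
  by exfalso; apply: no_e; exists x.
apply: (@in_conv_hull_pt _ _ _ pts (enum_rank (supp x))) => j; rewrite /pts enum_rankK.
by apply: ((extreme_point_supp e_ext.1).1 e_ext _ x_ext.1); rewrite supp_e.
Qed.

Lemma server_ray k0 : exists y z, dual_ray cls srv lam mu y z /\
  1 <= pair_val (fun _ => 0) (fun k => (k == k0)%:R) y z.
Proof.
apply: NNPP => /dual_ray_alternative [xi [t [p [s [[xi_ge0 _ p_ge0 s_gt0] [Rxi Gxi]]]]]].
pose q k := p k + s * (k == k0)%:R.
have q_ge0 k : 0 <= q k by rewrite addr_ge0 ?p_ge0 // mulr_ge0 ?ler0n // ltW.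
have Gxi' k : Gmul xi k = t - q k by rewrite Gxi /q opprD addrA.
have Rxi' i : Rmul xi i = t * lam i by rewrite Rxi mulr0 addr0.
have t_gt0 : 0 < t.
  have : 0 <= Gmul xi k0 by rewrite sumr_ge0.
  rewrite Gxi' /q eqxx mulr1.
  by have := p_ge0 k0; lra.
have := S_LP_tight (S_LP_scale t_gt0 xi_ge0 q_ge0 Rxi' Gxi') k0.
rewrite Gmul_scale Gxi' => /(congr1 ( *%R t)); rewrite mulVKf ?gt_eqF // mulr1 /q eqxx mulr1.
by have := p_ge0 k0; lra.
Qed.

Lemma activity_ray j0 : always_nonbasic cls srv lam mu j0 ->
  exists y z, dual_ray cls srv lam mu y z /\
    1 <= pair_val (fun i => - ((i == cls j0)%:R * mu j0)) (fun k => (k == srv j0)%:R) y z.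
Proof.
move=> nonbasic.
apply: NNPP => /dual_ray_alternative [xi [t [p [s [[xi_ge0 _ p_ge0 s_gt0] [Rxi Gxi]]]]]].
pose x j := xi j + s * (j == j0)%:R.
have x_ge0 j : 0 <= x j by rewrite addr_ge0 ?xi_ge0 // mulr_ge0 ?ler0n // ltW.
have xj0_gt0 : 0 < x j0 by rewrite /x eqxx mulr1 ltr_wpDl ?xi_ge0.
have Rx i : Rmul x i = t * lam i by rewrite Rmul_add_scale Rmul_delta Rxi eq_sym; ring.
have Gx k : Gmul x k = t - p k by rewrite Gmul_add_scale Gmul_delta Gxi eq_sym; ring.
have t_gt0 : 0 < t.
  by have := Gmul_ge srv j0 x_ge0; rewrite Gx; have := p_ge0 (srv j0); lra.
apply: nonbasic; exists (fun j => t^-1 * x j); split.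
  exact: S_LP_scale t_gt0 x_ge0 p_ge0 Rx Gx.
by rewrite mulr_gt0 ?invr_gt0.
Qed.

Lemma class_has_basic i : 0 < lam i ->
  exists j, cls j = i /\ potentially_basic cls srv lam mu j.
Proof.
move=> lam_gt0; have [[Rxi0 _ xi0_ge0] _] := xi0_opt.
have [j /andP [/eqP <- xi0j]|no_j] := pickP (fun j => (cls j == i) && (0 < xi0 j)).
  by exists j; split=> //; exists xi0.
move: lam_gt0; rewrite -Rxi0 /Rmul big1 ?ltxx // => j /eqP cls_j.
move: (no_j j); rewrite cls_j eqxx /= => /negbT; rewrite -leNgt => xi0j_le0.
by rewrite (@le_anti _ _ (xi0 j) 0) ?xi0j_le0 ?xi0_ge0 ?mulr0.
Qed.

Section UniqueDual.
Variables (ys : I -> R) (zs : K -> R).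
Hypotheses (dual_opt : dual_optimal cls srv lam mu ys zs)
  (dual_uniq : forall y z, dual_optimal cls srv lam mu y z ->
     (forall i, y i = ys i) /\ (forall k, z k = zs k)).

Lemma dual_obj_eq1 : dual_obj lam ys = 1.
Proof.
have [[zsum _ _] ys_max] := dual_opt.
apply/le_anti/andP; split; first exact: weak_duality xi0_opt.1 dual_opt.1.
have [k0 _] : exists k0 : K, true.
  case: (pickP (@predT K)) => [k0|K0]; first by exists k0.
  by move: zsum; rewrite big_pred0 // => /eqP; rewrite eq_sym oner_eq0.
have [y' [z' [ray]]] := server_ray k0; rewrite pair_val_server => z'k0.
have [z'_ge0 _ obj_y'] := ray.
have sum_z' : z' k0 <= \sum_k z' k by rewrite (bigD1 k0) //= lerDl sumr_ge0.
have := ys_max _ _ (dual_feasible_add_ray dual_opt.1 ray).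
rewrite dual_obj_add_div ler_pdivrMr; last by rewrite ltr_wpDr ?sumr_ge0.
nra.
Qed.

Lemma dual_ray_collinear y' z' : dual_ray cls srv lam mu y' z' ->
  (forall i, y' i = (\sum_k z' k) * ys i) /\ (forall k, z' k = (\sum_k z' k) * zs k).
Proof.
move=> ray; have [z'_ge0 _ obj_y'] := ray.
set Z := \sum_k z' k in obj_y' *.
have N_gt0 : 0 < 1 + Z by rewrite ltr_wpDr ?sumr_ge0.
have shift_opt : dual_optimal cls srv lam mu
    (fun i => (ys i + y' i) / (1 + Z)) (fun k => (zs k + z' k) / (1 + Z)).
  split=> [|y z yz_feas]; first exact: dual_feasible_add_ray dual_opt.1 ray.
  rewrite dual_obj_add_div dual_obj_eq1 ler_pdivlMr //.
  have := weak_duality xi0_opt.1 yz_feas; have : 0 <= Z by rewrite sumr_ge0.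
  nra.
have [ys_eq zs_eq] := dual_uniq shift_opt.
split=> [i|k]; [move: (ys_eq i) | move: (zs_eq k)];
  move/(congr1 ( *%R^~ (1 + Z))); rewrite divfK ?gt_eqF // => ?; lra.
Qed.

Lemma dual_ray_pos ey ez y' z' : dual_ray cls srv lam mu y' z' ->
  1 <= pair_val ey ez y' z' -> 0 < pair_val ey ez ys zs.
Proof.
move=> ray; have [y'_eq z'_eq] := dual_ray_collinear ray; have [z'_ge0 _ _] := ray.
have -> : pair_val ey ez y' z' = (\sum_k z' k) * pair_val ey ez ys zs.
  rewrite /pair_val mulrDr !mulr_sumr; congr (_ + _); apply: eq_bigr => ? _.
    by rewrite y'_eq mulrCA.
  by rewrite z'_eq mulrCA.
have : 0 <= \sum_k z' k by rewrite sumr_ge0.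
nra.
Qed.

Lemma zs_gt0 k : 0 < zs k.
Proof.
have [y [z [ray val]]] := server_ray k.
by have := dual_ray_pos ray val; rewrite pair_val_server.
Qed.

Lemma dual_slack_gt0 j : always_nonbasic cls srv lam mu j -> ys (cls j) * mu j < zs (srv j).
Proof.
move=> /activity_ray [y [z [ray val]]].
by have := dual_ray_pos ray val; rewrite pair_val_activity subr_gt0.
Qed.

Lemma compl_slack j : potentially_basic cls srv lam mu j -> ys (cls j) * mu j = zs (srv j).
Proof.
move=> [xi [S_xi xij_gt0]]; have [[zsum yz _] _] := dual_opt.
have [Rxi _ xi_ge0] := (S_LP_iff xi).1 S_xi.
have gap0 : \sum_j (zs (srv j) - ys (cls j) * mu j) * xi j = 0.
  rewrite duality_gap; under eq_bigr do rewrite S_LP_tight // mulr1.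
  by under [X in _ - X]eq_bigr do rewrite Rxi; rewrite zsum -dual_obj_eq1 subrr.
move/eqP: gap0; rewrite psumr_eq0 => [/allP/(_ j (mem_index_enum j))|j' _]; last first.
  by rewrite mulr_ge0 ?subr_ge0.
by rewrite mulf_eq0 (gt_eqF xij_gt0) orbF subr_eq0 => /eqP.
Qed.

Lemma ys_gt0 i : 0 < lam i -> (forall j, 0 < mu j) -> 0 < ys i.
Proof.
move=> /class_has_basic [j [<- basic]] mu_gt0.
by have := zs_gt0 (srv j); rewrite -(compl_slack basic) pmulr_lgt0.
Qed.

End UniqueDual.

End OptimalFace.

Theorem lemma2p3 (R : realFieldType) (I K J : finType)
  (cls : J -> I) (srv : J -> K) (lam : I -> R) (mu : J -> R)
  (y_star : I -> R) (z_star : K -> R) :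
  injective (fun j => (cls j, srv j)) ->
  (forall i, 0 < lam i) -> (forall j, 0 < mu j) ->
  (* (i) the optimal value of the LP is 1 *)
  lp_value_is cls srv lam mu 1 ->
  (* (ii) every xi in S_LP has G xi = 1_K *)
  (forall xi, S_LP cls srv lam mu xi -> forall k, Gmul srv xi k = 1) ->
  (* (iii) the dual problem has the unique solution (y_star, z_star) *)
  dual_optimal cls srv lam mu y_star z_star ->
  (forall y z, dual_optimal cls srv lam mu y z ->
     (forall i, y i = y_star i) /\ (forall k, z k = z_star k)) ->
  (* (1) *) (
      exists (M : nat) (pts : 'I_M -> J -> R),
        (forall m, extreme_point (S_LP cls srv lam mu) (pts m)) /\
        (forall xi, S_LP cls srv lam mu xi <-> in_conv_hull pts xi)) /\
      (* (2) *) dual_obj lam y_star = 1 /\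
      (* (3) *) (forall k, 0 < z_star k) /\
      (* (4) *) (forall j, potentially_basic cls srv lam mu j ->
                  y_star (cls j) * mu j = z_star (srv j)) /\
      (* (5) *) (forall j, always_nonbasic cls srv lam mu j ->
                  y_star (cls j) * mu j < z_star (srv j)) /\
      (* (6) *) (forall i, exists j, cls j = i /\ potentially_basic cls srv lam mu j) /\
      (* (7) *) (forall i, 0 < y_star i).
Proof.
move=> _ lam_gt0 mu_gt0 [xi0 xi0_opt] S_LP_tight dual_opt dual_uniq.
split; first exact (S_LP_modes xi0_opt S_LP_tight).
split; first exact (dual_obj_eq1 xi0_opt S_LP_tight dual_opt).
split; first exact (zs_gt0 xi0_opt S_LP_tight dual_opt dual_uniq).
split; first exact (compl_slack xi0_opt S_LP_tight dual_opt).
split; first exact (dual_slack_gt0 xi0_opt S_LP_tight dual_opt dual_uniq).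
split; first exact (fun i => class_has_basic xi0_opt (lam_gt0 i)).
exact (fun i => ys_gt0 xi0_opt S_LP_tight dual_opt dual_uniq (lam_gt0 i) mu_gt0).
Qed.
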